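(* For $p+q\ge4$, $HL^0(\mathfrak h_{p,q};\mathfrak h_{p,q})=0$ and $HL^1(\mathfrak h_{p,q};\mathfrak h_{p,q})=\langle I\rangle$ (one-dimensional), where $I:\mathfrak h_{p,q}\to\mathfrak h_{p,q}$ is the linear map with $I(\alpha_{ij})=0$, $I(\beta_{ij})=0$ and $I(\partial_i)=\partial_i$ for $i=1,\dots,n$.
   Context: Let $p,q$ be nonnegative integers, $n=p+q$. On $\mathbf R^n$ write $\partial_i=\partial/\partial x^i$; $\alpha_{ij}=x_i\partial_j-x_j\partial_i$ ($1\le i<j\le p$ or $p+1\le i<j\le n$), $\beta_{ij}=x_i\partial_j+x_j\partial_i$ ($1\le i\le p<j\le n$); $\mathfrak h_{p,q}$ is the Lie algebra of vector fields with basis $\{\alpha_{ij}\}\cup\{\beta_{ij}\}\cup\{\partial_i\}$. For a Leibniz (e.g. Lie) algebra $\mathfrak g$ and representation $V$ (here $V=\mathfrak g$ with the bracket), $HL^*(\mathfrak g;V)$ is the cohomology of $CL^k=\mathrm{Hom}(\mathfrak g^{\otimes k},V)$ with coboundary $\delta f(g_1\otimes\cdots\otimes g_{k+1})=[g_1,f(g_2\otimes\cdots\otimes g_{k+1})]+\sum_{i=2}^{k+1}(-1)^i[f(g_1\otimes\cdots\widehat{g_i}\cdots\otimes g_{k+1}),g_i]+\sum_{1\le i<j\le k+1}(-1)^{j+1}f(g_1\otimes\cdots\otimes g_{i-1}\otimes[g_i,g_j]\otimes\cdots\widehat{g_j}\cdots\otimes g_{k+1})$. *)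

From HB Require Import structures.
From mathcomp Require Import all_boot all_algebra.
From mathcomp Require Import mpoly.
From mathcomp Require Import reals.
Set Implicit Arguments. Unset Strict Implicit. Unset Printing Implicit Defensive.
Import GRing.Theory.
Local Open Scope ring_scope.

(* A polynomial vector field  X = sum_k X_k d_k  on R^n, X_k in R[x_1..x_n]. *)
Definition VF (R : realType) (n : nat) := {ffun 'I_n -> {mpoly R[n]}}.

Definition vf_bracket (R : realType) (n : nat) (X Y : VF R n) : VF R n :=
  [ffun k => \sum_(j < n) (X j * mderiv j (Y k) - Y j * mderiv j (X k))].

Definition vf_scale (R : realType) (n : nat) (a : R) (X : VF R n) : VF R n :=
  [ffun k => a *: X k].
Definition vf_add (R : realType) (n : nat) (X Y : VF R n) : VF R n :=
  [ffun k => X k + Y k].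
Definition vf_sub (R : realType) (n : nat) (X Y : VF R n) : VF R n :=
  [ffun k => X k - Y k].
Definition vf_zero (R : realType) (n : nat) : VF R n := [ffun k => 0].

Definition vf_partial (R : realType) (n : nat) (i : 'I_n) : VF R n :=
  [ffun k => ((k == i)%:R : {mpoly R[n]})].
Definition vf_alpha (R : realType) (n : nat) (i j : 'I_n) : VF R n :=
  [ffun k => (k == j)%:R * 'X_i - (k == i)%:R * 'X_j].
Definition vf_beta (R : realType) (n : nat) (i j : 'I_n) : VF R n :=
  [ffun k => (k == j)%:R * 'X_i + (k == i)%:R * 'X_j].

(* Index conventions (0-based): coordinates 0..p-1 form the first block,
   p..n-1 the second block (paper: 1..p and p+1..n). *)
Definition alpha_index (p : nat) (n : nat) (i j : 'I_n) : bool :=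
  (i < j)%N && (((j < p)%N) || ((p <= i)%N)).
Definition beta_index (p : nat) (n : nat) (i j : 'I_n) : bool :=
  (i < p)%N && (p <= j)%N.

Definition hpq_basis (R : realType) (p q : nat) : seq (VF R (p + q)) :=
  [seq vf_alpha R ij.1 ij.2 | ij <- enum [pred ij : 'I_(p+q) * 'I_(p+q) |
                                             alpha_index p ij.1 ij.2]]
  ++ [seq vf_beta R ij.1 ij.2 | ij <- enum [pred ij : 'I_(p+q) * 'I_(p+q) |
                                             beta_index p ij.1 ij.2]]
  ++ [seq vf_partial R i | i <- enum 'I_(p+q)].

Definition in_hpq (R : realType) (p q : nat) (X : VF R (p + q)) : Prop :=
  exists c : nat -> R,
    X = \big[@vf_add R (p+q)/vf_zero R (p+q)]_(k < size (hpq_basis R p q))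
          vf_scale (c k) (nth (vf_zero R (p+q)) (hpq_basis R p q) k).

(* 1-cochains CL^1 = Hom(h, h): maps that send h to h and are linear on h
   (values outside h are irrelevant; all conditions below are restricted to h). *)
Definition is_cochain1 (R : realType) (p q : nat) (f : VF R (p+q) -> VF R (p+q)) : Prop :=
  (forall X, in_hpq X -> in_hpq (f X)) /\
  (forall (a : R) X Y, in_hpq X -> in_hpq Y ->
     f (vf_add (vf_scale a X) Y) = vf_add (vf_scale a (f X)) (f Y)).

Definition delta0 (R : realType) (n : nat) (x : VF R n) (g : VF R n) : VF R n :=
  vf_bracket g x.

Definition delta1 (R : realType) (n : nat) (f : VF R n -> VF R n) (g1 g2 : VF R n)
  : VF R n :=
  vf_sub (vf_add (vf_bracket g1 (f g2)) (vf_bracket (f g1) g2)) (f (vf_bracket g1 g2)).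

From HB Require Import structures.
From mathcomp Require Import all_boot all_algebra.
From mathcomp Require Import mpoly.
From mathcomp Require Import reals.
From mathcomp Require Import ring lra zify.
Set Implicit Arguments. Unset Strict Implicit. Unset Printing Implicit Defensive.
Import GRing.Theory Num.Theory.
Local Open Scope ring_scope.

(* Every element of h_{p,q} is an affine field a + Mx with M in so(p,q), and
   conversely; so brackets and cochains can be computed on pairs (a, M).
   A derivation f is pinned down by its brackets with the translations d_i and
   the generators x_i d_j - eta_i eta_j x_j d_i: from [d_i, d_j] = 0 one gets
   f(d_i) = A d_i for a constant matrix A, then A = c Id + K with K in so(p,q),
   and the constant parts of f on the generators are given by a vector v.
   Hence f = c I + ad(v + Kx). Since I(d_i) = d_i is not [d_i, x] for any x in
   h_{p,q} (the linear part of x has zero diagonal), I spans HL^1; HL^0 = 0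
   because h_{p,q} has trivial centre. The hypothesis p + q >= 4 is used to
   find an index distinct from three given ones. *)

Lemma vf_addE (R : realType) n (X Y : VF R n) : vf_add X Y = X + Y.
Proof. by apply/ffunP=> k; rewrite !ffunE. Qed.

Lemma vf_scaleE (R : realType) n a (X : VF R n) : vf_scale a X = a *: X.
Proof. by apply/ffunP=> k; rewrite !ffunE. Qed.

Lemma vf_zeroE (R : realType) n : vf_zero R n = 0.
Proof. by apply/ffunP=> k; rewrite !ffunE. Qed.

Lemma vf_subE (R : realType) n (X Y : VF R n) : vf_sub X Y = X - Y.
Proof. by apply/ffunP=> k; rewrite !ffunE. Qed.

Lemma big_vf_addE (R : realType) n m (G : nat -> VF R n) :
  \big[@vf_add R n/vf_zero R n]_(k < m) G k = \sum_(k < m) G k.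
Proof.
elim: m => [|m IH]; first by rewrite !big_ord0 vf_zeroE.
by rewrite !big_ord_recr /= IH -vf_addE.
Qed.

Lemma vf_bracketDl (R : realType) n c (X Y Z : VF R n) :
  vf_bracket (c *: X + Y) Z = c *: vf_bracket X Z + vf_bracket Y Z.
Proof.
apply/ffunP=> k; rewrite !ffunE scaler_sumr -big_split /=; apply: eq_bigr=> j _.
rewrite !ffunE mderivD mderivZ mulrDl mulrDr -scalerAl -scalerAr scalerBr.
by rewrite opprD addrACA.
Qed.

Lemma mderivX1 (R : realType) n (i j : 'I_n) :
  mderiv j ('X_i : {mpoly R[n]}) = (i == j)%:R%:MP.
Proof.
rewrite mderivX mnm1E; have [->|_] := eqVneq i j; last by rewrite scale0r.
have -> : (U_(j) - U_(j) = 0)%MM by apply/mnmP=> k; rewrite mnmBE mnm0E subnn.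
by rewrite mpolyX0 scale1r.
Qed.

Lemma sum_mul_delta (R : realType) n (f : 'I_n -> R) (l : 'I_n) :
  \sum_i f i * (i == l)%:R = f l.
Proof.
rewrite (bigD1 l) //= eqxx mulr1 big1 ?addr0 // => i hi; by rewrite (negbTE hi) mulr0.
Qed.

Lemma sum_delta_scale (R : realType) n (c : R) (i : 'I_n) :
  \sum_l (c * (l == i)%:R) *: ('X_l : {mpoly R[n]}) = c *: 'X_i.
Proof.
rewrite (bigD1 i) //= eqxx mulr1 big1 ?addr0 // => l hl.
by rewrite (negbTE hl) mulr0 scale0r.
Qed.

Lemma sum_only1 (R : realType) n (F : 'I_n -> R) (l : 'I_n) :
  (forall j, j != l -> F j = 0) -> \sum_j F j = F l.
Proof. by move=> h; rewrite (bigD1 l) //= big1 ?addr0 // => j /h. Qed.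

Lemma sum_only3 (R : realType) n (F : 'I_n -> R) (a b c : 'I_n) :
  a != b -> a != c -> b != c ->
  (forall m, m != a -> m != b -> m != c -> F m = 0) -> \sum_m F m = F a + F b + F c.
Proof.
move=> hab hac hbc h; rewrite (bigD1 a) //= (bigD1 b) 1?eq_sym //= (bigD1 c) /=; last first.
  by rewrite [c == a]eq_sym [c == b]eq_sym hac hbc.
rewrite big1 ?addr0 ?addrA // => m /andP [/andP [hma hmb] hmc]; exact: h.
Qed.

Lemma exists_ord_neq3 n (hn : (4 <= n)%N) (a b c : 'I_n) :
  exists m : 'I_n, [/\ m != a, m != b & m != c].
Proof.
have [m [hm ha hb hc]] : exists m : nat, [/\ (m < 4)%N, m != a, m != b & m != c].
  case h0: [|| 0%N == a, 0%N == b | 0%N == c]; last first.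
    by exists 0%N; apply/and4P; move: h0; lia.
  case h1: [|| 1%N == a, 1%N == b | 1%N == c]; last first.
    by exists 1%N; apply/and4P; move: h1; lia.
  case h2: [|| 2%N == a, 2%N == b | 2%N == c]; last first.
    by exists 2%N; apply/and4P; move: h2; lia.
  by exists 3%N; apply/and4P; move: h0 h1 h2; lia.
have hmn : (m < n)%N by lia.
by exists (Ordinal hmn); split; rewrite -val_eqE.
Qed.

Ltac case_eqs := repeat match goal with |- context [(?x == ?y)] =>
   case: (@eqP _ x y) => [?|?]; try subst; try congruence end.

Section AffineFields.
Variables (R : realType) (n : nat).
Implicit Types (a b c : 'I_n -> R) (M N : 'I_n -> 'I_n -> R) (X Y : VF R n).

Definition vf_affine a M : VF R n :=
  [ffun k => (a k)%:MP + \sum_(l < n) M k l *: 'X_l].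

Definition vf_const a := vf_affine a (fun _ _ => 0).

Definition cst_part X (k : 'I_n) : R := mcoeff 0%MM (X k).
Definition lin_part X (k l : 'I_n) : R := mcoeff U_(l)%MM (X k).

Definition unitv (i : 'I_n) (k : 'I_n) : R := (k == i)%:R.

Lemma cst_part_affine a M k : cst_part (vf_affine a M) k = a k.
Proof.
rewrite /cst_part ffunE mcoeffD mcoeffC eqxx mulr1 raddf_sum /= big1 ?addr0 // => l _.
by rewrite mcoeffZ mcoeffX mnm1_eq0 mulr0.
Qed.

Lemma lin_part_affine a M k l : lin_part (vf_affine a M) k l = M k l.
Proof.
rewrite /lin_part ffunE mcoeffD mcoeffC mnm1_eq0 mulr0 add0r raddf_sum /=.
rewrite (bigD1 l) //= big1 ?addr0 => [|m hm]; rewrite mcoeffZ mcoeffXU ?eqxx ?mulr1 //.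
by rewrite (negbTE hm) mulr0.
Qed.

Lemma cst_partD X Y k : cst_part (X + Y) k = cst_part X k + cst_part Y k.
Proof. by rewrite /cst_part ffunE mcoeffD. Qed.

Lemma cst_partZ (r : R) X k : cst_part (r *: X) k = r * cst_part X k.
Proof. by rewrite /cst_part ffunE mcoeffZ. Qed.

Lemma vf_affine_inj a M b N : vf_affine a M = vf_affine b N -> a =1 b /\ M =2 N.
Proof.
move=> e; split=> [k|k l].
  by rewrite -(cst_part_affine a M) -(cst_part_affine b N) e.
by rewrite -(lin_part_affine a M) -(lin_part_affine b N) e.
Qed.

Lemma eq_vf_affine a M b N : a =1 b -> M =2 N -> vf_affine a M = vf_affine b N.
Proof.
move=> ea eM; apply/ffunP=> k; rewrite !ffunE ea; congr (_ + _).
by apply: eq_bigr=> l _; rewrite eM.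
Qed.

Lemma vf_affine0 : vf_affine (fun _ => 0) (fun _ _ => 0) = 0.
Proof. by apply/ffunP=> k; rewrite !ffunE big1 ?addr0 // => l _; rewrite scale0r. Qed.

Lemma vf_affine_eq0 a M : vf_affine a M = 0 -> (forall k, a k = 0) /\ (forall k l, M k l = 0).
Proof. by rewrite -vf_affine0 => /vf_affine_inj. Qed.

Lemma vf_affineD a M b N :
  vf_affine a M + vf_affine b N = vf_affine (fun k => a k + b k) (fun k l => M k l + N k l).
Proof.
apply/ffunP=> k; rewrite !ffunE raddfD /= -!addrA; congr (_ + _).
by rewrite addrCA -big_split /=; congr (_ + _); apply: eq_bigr => l _; rewrite scalerDl.
Qed.

Lemma vf_affineZ (r : R) a M :
  r *: vf_affine a M = vf_affine (fun k => r * a k) (fun k l => r * M k l).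
Proof.
apply/ffunP=> k; rewrite !ffunE scalerDr mpolyCM mul_mpolyC scaler_sumr; congr (_ + _).
by apply: eq_bigr => l _; rewrite scalerA.
Qed.

Lemma vf_affine_sum (T : Type) (r : seq T) (P : pred T) (A : T -> 'I_n -> R) B :
  \sum_(u <- r | P u) vf_affine (A u) (B u) =
  vf_affine (fun k => \sum_(u <- r | P u) A u k) (fun k l => \sum_(u <- r | P u) B u k l).
Proof.
apply/ffunP=> k; rewrite sum_ffunE ffunE.
under eq_bigr do rewrite ffunE.
rewrite big_split /= raddf_sum; congr (_ + _).
rewrite exchange_big /=; apply: eq_bigr=> l _.
by rewrite scaler_suml.
Qed.

Lemma mderiv_affine (r : R) (m : 'I_n -> R) (j : 'I_n) :
  mderiv j (r%:MP + \sum_(l < n) m l *: ('X_l : {mpoly R[n]})) = (m j)%:MP.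
Proof.
rewrite mderivD mderivC add0r linear_sum /=.
rewrite (bigD1 j) //= big1 ?addr0 => [|l hl]; rewrite mderivZ mderivX1.
  by rewrite eqxx -mul_mpolyC -mpolyCM mulr1.
by rewrite (negbTE hl) scaler0.
Qed.

Lemma vf_bracket_affine a M b N :
  vf_bracket (vf_affine a M) (vf_affine b N) =
  vf_affine (fun k => \sum_j (N k j * a j - M k j * b j))
            (fun k l => \sum_j (N k j * M j l - M k j * N j l)).
Proof.
have sum_affine (w c : 'I_n -> R) L :
    \sum_j w j *: ((c j)%:MP + \sum_l L j l *: 'X_l) =
    (\sum_j w j * c j)%:MP + \sum_l (\sum_j w j * L j l) *: ('X_l : {mpoly R[n]}).
  under eq_bigr do rewrite scalerDr scaler_sumr.
  rewrite big_split /= raddf_sum /=; congr (_ + _).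
    by apply: eq_bigr=> j _; rewrite mpolyCM mul_mpolyC.
  rewrite exchange_big /=; apply: eq_bigr=> l _.
  by rewrite scaler_suml; apply: eq_bigr=> j _; rewrite scalerA.
apply/ffunP=> k; rewrite !ffunE.
under eq_bigr do rewrite !mderiv_affine mulrC mul_mpolyC [X in _ - X]mulrC mul_mpolyC !ffunE.
rewrite sumrB !sum_affine (@sumrB R) raddfB /=.
have -> : \sum_(l < n) (\sum_j (N k j * M j l - M k j * N j l)) *: ('X_l : {mpoly R[n]}) =
   \sum_l (\sum_j N k j * M j l) *: 'X_l - \sum_l (\sum_j M k j * N j l) *: 'X_l.
  by rewrite -sumrB; apply: eq_bigr=> l _; rewrite (@sumrB R) scalerBl.
by rewrite opprD addrACA.
Qed.

Lemma vf_bracket_const_l a b N :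
  vf_bracket (vf_const a) (vf_affine b N) = vf_const (fun k => \sum_j N k j * a j).
Proof.
rewrite vf_bracket_affine; apply: eq_vf_affine => [k|k l] /=.
  by under eq_bigr do rewrite mul0r subr0.
by apply: big1 => j _; rewrite mulr0 mul0r subrr.
Qed.

Lemma vf_bracket_const_r a M b :
  vf_bracket (vf_affine a M) (vf_const b) = vf_const (fun k => - \sum_j M k j * b j).
Proof.
rewrite vf_bracket_affine; apply: eq_vf_affine => [k|k l] /=.
  by under eq_bigr do rewrite mul0r add0r; rewrite sumrN.
by apply: big1 => j _; rewrite mulr0 mul0r subrr.
Qed.

Lemma vf_partial_const i : vf_partial R i = vf_const (unitv i).
Proof.
apply/ffunP=> k; rewrite !ffunE /unitv big1 ?addr0 => [|l _]; last by rewrite scale0r.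
by case: (k == i); rewrite ?mpolyC1 ?mpolyC0.
Qed.

Lemma vf_bracket_partial_l i a M :
  vf_bracket (vf_partial R i) (vf_affine a M) = vf_const (fun k => M k i).
Proof.
by rewrite vf_partial_const vf_bracket_const_l; apply: eq_vf_affine => // k; rewrite sum_mul_delta.
Qed.

Lemma vf_bracket_partial_r i a M :
  vf_bracket (vf_affine a M) (vf_partial R i) = vf_const (fun k => - M k i).
Proof.
by rewrite vf_partial_const vf_bracket_const_r; apply: eq_vf_affine => // k; rewrite sum_mul_delta.
Qed.

Lemma vf_const_partial_expansion c : vf_const c = \sum_i c i *: vf_partial R i.
Proof.
under eq_bigr do rewrite vf_partial_const vf_affineZ.
rewrite vf_affine_sum; apply: eq_vf_affine => [k|k l] /=; last first.
  by rewrite big1 // => i _; rewrite mulr0.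
by rewrite /unitv -[LHS](sum_mul_delta c k); apply: eq_bigr => i _; rewrite eq_sym.
Qed.

End AffineFields.

Section IndefiniteOrthogonal.
Variables (R : realType) (n p : nat).
Implicit Types (M N : 'I_n -> 'I_n -> R).

(* The diagonal of the metric diag(1,..,1,-1,..,-1) with p plus signs. *)
Definition eta (k : 'I_n) : R := if (k < p)%N then 1 else -1.

Definition is_so M := forall k l, M k l = - (eta k * eta l * M l k).

Definition pair_mx (i j : 'I_n) (t : R) (k l : 'I_n) : R :=
  (k == j)%:R * (l == i)%:R + t * ((k == i)%:R * (l == j)%:R).

(* x_i d_j - eta_i eta_j x_j d_i, that is alpha_ij or beta_ij according as
   i and j lie in the same block or not. *)
Definition so_gen (i j : 'I_n) : VF R n :=
  vf_affine (fun _ => 0) (pair_mx i j (- (eta i * eta j))).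

Lemma eta_sqr k : eta k * eta k = 1.
Proof. by rewrite /eta; case: ifP => _; rewrite ?mulr1 ?mulrNN ?mulr1. Qed.

Lemma eta_alpha (i j : 'I_n) : alpha_index p i j -> eta i * eta j = 1.
Proof.
rewrite /alpha_index /eta => /andP [hij /orP [hj|hi]].
  by rewrite hj (ltn_trans hij hj) mulr1.
by rewrite ltnNge hi /= ltnNge (leq_trans hi (ltnW hij)) /= mulrNN mulr1.
Qed.

Lemma eta_beta (i j : 'I_n) : beta_index p i j -> eta i * eta j = -1.
Proof. by rewrite /beta_index /eta => /andP [hi hj]; rewrite hi ltnNge hj /= mul1r. Qed.

Lemma is_so0 : is_so (fun _ _ => 0).
Proof. by move=> k l; rewrite mulr0 oppr0. Qed.

Lemma is_soD M N : is_so M -> is_so N -> is_so (fun k l => M k l + N k l).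
Proof. by move=> hM hN k l; rewrite hM hN mulrDr opprD. Qed.

Lemma is_soZ (r : R) M : is_so M -> is_so (fun k l => r * M k l).
Proof. by move=> hM k l; rewrite hM mulrN mulrCA. Qed.

Lemma is_so_diag M k : is_so M -> M k k = 0.
Proof. by move=> /(_ k k); rewrite eta_sqr mul1r => e; lra. Qed.

Lemma is_so_commutator M N : is_so M -> is_so N ->
  is_so (fun k l => \sum_j (N k j * M j l - M k j * N j l)).
Proof.
move=> hM hN k l; rewrite mulr_sumr -sumrN; apply: eq_bigr => j _.
rewrite (hN k j) (hM j l) (hM k j) (hN j l).
by rewrite /eta; repeat case: ifP => _; ring.
Qed.

Lemma is_so_pair_mx (i j : 'I_n) : is_so (pair_mx i j (- (eta i * eta j))).
Proof.
move=> k l; rewrite /pair_mx; case_eqs; rewrite ?mulr0 ?mulr1 ?mul0r ?addr0 ?add0r;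
  by rewrite /eta; repeat case: ifP => _; rewrite /=; ring.
Qed.

Lemma sum_pair_mx_l (i j k : 'I_n) t (v : 'I_n -> R) :
  \sum_m pair_mx i j t k m * v m = (k == j)%:R * v i + t * ((k == i)%:R * v j).
Proof.
rewrite /pair_mx; under eq_bigr do rewrite mulrDl; rewrite big_split /=.
rewrite (sum_only1 (l := i)) => [|m hm]; last by rewrite (negbTE hm) !mulr0 mul0r.
rewrite (sum_only1 (l := j)) => [|m hm]; last by rewrite (negbTE hm) !mulr0 mul0r.
by rewrite !eqxx !mulr1 mulrA.
Qed.

Lemma sum_pair_mx_r (i j m : 'I_n) t (v : 'I_n -> R) :
  \sum_l v l * pair_mx i j t l m = v j * (m == i)%:R + t * (v i * (m == j)%:R).
Proof.
rewrite /pair_mx; under eq_bigr do rewrite mulrDr; rewrite big_split /=.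
rewrite (sum_only1 (l := j)) => [|l hl]; last by rewrite (negbTE hl) !mul0r mulr0.
rewrite (sum_only1 (l := i)) => [|l hl]; last by rewrite (negbTE hl) !mul0r !mulr0.
by rewrite !eqxx !mul1r mulrCA.
Qed.

Lemma so_gen_affine (i j : 'I_n) (t : R) :
  vf_affine (fun _ => 0) (pair_mx i j t) =
  [ffun k => (k == j)%:R * 'X_i + t *: ((k == i)%:R * 'X_j)].
Proof.
apply/ffunP => k; rewrite !ffunE mpolyC0 add0r /pair_mx.
under eq_bigr do rewrite scalerDl mulrA.
rewrite big_split /= !sum_delta_scale.
by case: (k == j); case: (k == i);
  rewrite ?mul1r ?mul0r ?mulr1 ?mulr0 ?scale1r ?scale0r ?scaler0.
Qed.

Lemma vf_alpha_so_gen (i j : 'I_n) : alpha_index p i j -> vf_alpha R i j = so_gen i j.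
Proof.
move=> h; rewrite /so_gen eta_alpha // so_gen_affine.
by apply/ffunP => k; rewrite !ffunE scaleN1r.
Qed.

Lemma vf_beta_so_gen (i j : 'I_n) : beta_index p i j -> vf_beta R i j = so_gen i j.
Proof.
move=> h; rewrite /so_gen eta_beta // opprK so_gen_affine.
by apply/ffunP => k; rewrite !ffunE scale1r.
Qed.

Lemma so_gen_swap (i j : 'I_n) : so_gen i j = (- (eta i * eta j)) *: so_gen j i.
Proof.
rewrite /so_gen vf_affineZ; apply: eq_vf_affine => [k|k l]; first by rewrite mulr0.
by rewrite /pair_mx; case_eqs; rewrite /eta; repeat case: ifP => _; rewrite /=; ring.
Qed.

Lemma so_gen_diag (i : 'I_n) : so_gen i i = 0.
Proof.
rewrite /so_gen -vf_affine0; apply: eq_vf_affine => // k l.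
by rewrite /pair_mx eta_sqr mulN1r subrr.
Qed.

Lemma vf_bracket_so_gen (i j k : 'I_n) : i != j -> i != k -> j != k ->
  vf_bracket (so_gen i j) (so_gen j k) = so_gen i k.
Proof.
move=> hij hik hjk; rewrite /so_gen vf_bracket_affine.
apply: eq_vf_affine => [k'|k' l]; first by rewrite big1 // => m _; rewrite !mulr0 subrr.
rewrite (sum_only3 hij hik hjk) => [|m hmi hmj hmk]; last first.
  by rewrite /pair_mx (negbTE hmi) (negbTE hmj) (negbTE hmk) !(mul0r, mulr0, addr0, subrr).
rewrite /pair_mx !eqxx [j == i]eq_sym [k == i]eq_sym [k == j]eq_sym.
rewrite (negbTE hij) (negbTE hik) (negbTE hjk) /=.
move: hij hik hjk => /eqP ? /eqP ? /eqP ?; case_eqs.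
all: by rewrite /eta; repeat case: ifP => _; rewrite /=; ring.
Qed.

Lemma cst_part_bracket_so_gen_l (i j : 'I_n) b N k :
  cst_part (vf_bracket (so_gen i j) (vf_affine b N)) k =
  - \sum_m pair_mx i j (- (eta i * eta j)) k m * b m.
Proof.
rewrite /so_gen vf_bracket_affine cst_part_affine.
by under eq_bigr do rewrite mulr0 sub0r; rewrite sumrN.
Qed.

Lemma cst_part_bracket_so_gen_r (i j : 'I_n) b N k :
  cst_part (vf_bracket (vf_affine b N) (so_gen i j)) k =
  \sum_m pair_mx i j (- (eta i * eta j)) k m * b m.
Proof.
rewrite /so_gen vf_bracket_affine cst_part_affine.
by under eq_bigr do rewrite mulr0 subr0.
Qed.

(* The factor 1/2 compensates for both so_gen i j and so_gen j i occurring. *)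
Lemma vf_affine_so_expansion a M : is_so M ->
  vf_affine a M = \sum_i a i *: vf_partial R i + \sum_i \sum_j (M j i / 2) *: so_gen i j.
Proof.
move=> hM.
under [X in _ = X + _]eq_bigr do rewrite vf_partial_const vf_affineZ.
under [X in _ = _ + X]eq_bigr do (under eq_bigr do rewrite /so_gen vf_affineZ;
  rewrite vf_affine_sum).
rewrite !vf_affine_sum vf_affineD; apply: eq_vf_affine => [k|k l] /=.
  under [X in _ = _ + X]eq_bigr do (under eq_bigr do rewrite mulr0; rewrite big1_eq).
  rewrite big1_eq addr0 -[LHS](sum_mul_delta a k).
  by apply: eq_bigr => i _; rewrite /unitv eq_sym.
under eq_bigr do rewrite mulr0.
rewrite big1_eq add0r /pair_mx.
under eq_bigr do (under eq_bigr do rewrite mulrDr; rewrite big_split /=).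
rewrite big_split /=.
rewrite (sum_only1 (l := l)) => [|i hi]; last first.
  by apply: big1 => j _; rewrite [l == i]eq_sym (negbTE hi) !mulr0.
rewrite (sum_only1 (l := k)) => [|j hj]; last by rewrite [k == j]eq_sym (negbTE hj) !mul0r mulr0.
rewrite (sum_only1 (l := k)) => [|i hi]; last first.
  by apply: big1 => j _; rewrite [k == i]eq_sym (negbTE hi) !mul0r !mulr0.
rewrite (sum_only1 (l := l)) => [|j hj]; last by rewrite [l == j]eq_sym (negbTE hj) !mulr0.
by rewrite !eqxx /= [in LHS]hM [M k l]hM; field.
Qed.

End IndefiniteOrthogonal.

Section HpqMembership.
Variables (R : realType) (p q : nat).
Local Notation n := (p + q).
Local Notation B := (hpq_basis R p q).

Lemma in_hpqE (X : VF R n) :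
  in_hpq X <-> exists c : nat -> R, X = \sum_(k < size B) c k *: nth 0 B k.
Proof.
rewrite /in_hpq; split=> -[c e]; exists c; rewrite e
  (big_vf_addE _ (fun k => vf_scale (c k) (nth (vf_zero R n) B k))) vf_zeroE;
  by apply: eq_bigr => k _; rewrite vf_scaleE.
Qed.

Lemma in_hpq0 : @in_hpq R p q 0.
Proof. by apply/in_hpqE; exists (fun _ => 0); rewrite big1 // => k _; rewrite scale0r. Qed.

Lemma in_hpq_lin (r : R) (X Y : VF R n) : in_hpq X -> in_hpq Y -> in_hpq (r *: X + Y).
Proof.
move=> /in_hpqE [a ->] /in_hpqE [b ->]; apply/in_hpqE; exists (fun k => r * a k + b k).
by rewrite scaler_sumr -big_split /=; apply: eq_bigr => k _; rewrite scalerDl scalerA.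
Qed.

Lemma in_hpqD (X Y : VF R n) : in_hpq X -> in_hpq Y -> in_hpq (X + Y).
Proof. by move=> hX hY; rewrite -[X]scale1r; apply: in_hpq_lin. Qed.

Lemma in_hpqZ (r : R) (X : VF R n) : in_hpq X -> in_hpq (r *: X).
Proof. by move=> hX; rewrite -[_ *: _]addr0; apply: in_hpq_lin => //; apply: in_hpq0. Qed.

Lemma in_hpq_sum (T : Type) (r : seq T) (P : pred T) (G : T -> VF R n) :
  (forall u, P u -> in_hpq (G u)) -> in_hpq (\sum_(u <- r | P u) G u).
Proof. by move=> h; apply: (big_ind (@in_hpq R p q)) => //; [apply: in_hpq0|apply: in_hpqD]. Qed.

Lemma in_hpq_basis (X : VF R n) : X \in B -> in_hpq X.
Proof.
move=> hX; apply/in_hpqE; exists (fun k => (k == index X B)%:R).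
have hi : (index X B < size B)%N by rewrite index_mem.
rewrite (bigD1 (Ordinal hi)) //= eqxx scale1r nth_index //.
rewrite big1 ?addr0 // => k hk.
suff /negbTE -> : (k : nat) != index X B by rewrite scale0r.
by apply: contra hk => /eqP e; apply/eqP/val_inj.
Qed.

Lemma hpq_basisP (P : VF R n -> Prop) :
  (forall i j : 'I_n, (i < j)%N -> P (so_gen R p i j)) ->
  (forall i : 'I_n, P (vf_partial R i)) ->
  forall X, X \in B -> P X.
Proof.
move=> hgen hpart X; rewrite /hpq_basis !mem_cat.
case/or3P => [/mapP [ij hij ->]|/mapP [ij hij ->]|/mapP [i _ ->]] //.
- move: hij; rewrite mem_enum inE => h; rewrite (vf_alpha_so_gen _ h).
  by apply: hgen; case/andP: h.
- move: hij; rewrite mem_enum inE => h; rewrite (vf_beta_so_gen _ h).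
  by apply: hgen; case/andP: h => h1 h2; exact: leq_trans h1 h2.
Qed.

Lemma in_hpq_partial (i : 'I_n) : in_hpq (vf_partial R i).
Proof.
apply: in_hpq_basis; rewrite /hpq_basis !mem_cat; apply/or3P; apply: Or33.
by apply/mapP; exists i; rewrite ?mem_enum.
Qed.

Lemma in_hpq_so_gen (i j : 'I_n) : in_hpq (so_gen R p i j).
Proof.
wlog hij : i j / (i <= j)%N.
  move=> h; case: (leqP i j) => [/h //|/ltnW /h hji].
  by rewrite so_gen_swap; apply: in_hpqZ.
case: (ltngtP i j) hij => // [hlt _|/val_inj -> _]; last first.
  by rewrite so_gen_diag; apply: in_hpq0.
apply: in_hpq_basis; rewrite /hpq_basis !mem_cat; apply/or3P.
case ha: (alpha_index p i j).
  apply: Or31; apply/mapP; exists (i, j); first by rewrite mem_enum inE.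
  by rewrite (vf_alpha_so_gen _ ha).
have hb : beta_index p i j.
  move: ha; rewrite /alpha_index /beta_index hlt /= => /negbT.
  by rewrite negb_or -leqNgt -ltnNge => /andP [-> ->].
apply: Or32; apply/mapP; exists (i, j); first by rewrite mem_enum inE.
by rewrite (vf_beta_so_gen _ hb).
Qed.

Lemma in_hpq_affine_so a M : is_so p M -> @in_hpq R p q (vf_affine a M).
Proof.
move=> hM; rewrite (vf_affine_so_expansion a hM); apply: in_hpqD; apply: in_hpq_sum => i _.
  by apply: in_hpqZ; apply: in_hpq_partial.
by apply: in_hpq_sum => j _; apply: in_hpqZ; apply: in_hpq_so_gen.
Qed.

Lemma in_hpq_affine (X : VF R n) :
  in_hpq X -> is_so p (lin_part X) /\ X = vf_affine (cst_part X) (lin_part X).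
Proof.
move=> /in_hpqE [c ->].
have [a [M [hM ->]]] : exists a M, is_so p M /\
    \sum_(k < size B) c k *: nth 0 B k = vf_affine a M.
  apply: (big_ind (fun Y => exists a M, is_so p M /\ Y = vf_affine a M)).
  - by exists (fun _ => 0), (fun _ _ => 0); rewrite vf_affine0; split=> //; apply: is_so0.
  - move=> _ _ [a [M [hM ->]]] [b [N [hN ->]]].
    by do 2!eexists; split; [apply: is_soD hM hN | rewrite vf_affineD].
  move=> k _; move: (nth 0 B k) (mem_nth 0 (ltn_ord k)).
  apply: (hpq_basisP (P := fun X => exists a M, is_so p M /\ c k *: X = vf_affine a M)).
    move=> i j _; rewrite /so_gen vf_affineZ.
    by do 2!eexists; split; last reflexivity; apply: is_soZ; apply: is_so_pair_mx.
  move=> i; rewrite vf_partial_const vf_affineZ.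
  by do 2!eexists; split; last reflexivity; apply: is_soZ; apply: is_so0.
split; first by move=> k l; rewrite !lin_part_affine.
by apply: eq_vf_affine => [k|k l]; rewrite ?cst_part_affine ?lin_part_affine.
Qed.

Lemma in_hpq_cst_lin (X : VF R n) : in_hpq X -> X = vf_affine (cst_part X) (lin_part X).
Proof. by case/in_hpq_affine. Qed.

Lemma in_hpq_bracket (X Y : VF R n) : in_hpq X -> in_hpq Y -> in_hpq (vf_bracket X Y).
Proof.
move=> /in_hpq_affine [hM ->] /in_hpq_affine [hN ->].
by rewrite vf_bracket_affine; apply: in_hpq_affine_so; apply: is_so_commutator.
Qed.

Definition hpq_linear (F : VF R n -> VF R n) :=
  forall (r : R) X Y, in_hpq X -> in_hpq Y -> F (r *: X + Y) = r *: F X + F Y.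

Lemma cochain1_hpq_linear (F : VF R n -> VF R n) : is_cochain1 F -> hpq_linear F.
Proof. by move=> [_ h] r X Y hX hY; have := h r X Y hX hY; rewrite !vf_addE !vf_scaleE. Qed.

Lemma hpq_linear0 F : hpq_linear F -> F 0 = 0.
Proof.
move=> h; have := h 1 0 0 in_hpq0 in_hpq0.
by rewrite scaler0 addr0 scale1r => e; apply: (addrI (F 0)); rewrite addr0 -e.
Qed.

Lemma hpq_linearZ F (r : R) X : hpq_linear F -> in_hpq X -> F (r *: X) = r *: F X.
Proof.
move=> hF hX; have := hF r X 0 hX in_hpq0; rewrite !addr0 => ->.
by rewrite (hpq_linear0 hF) addr0.
Qed.

Lemma hpq_linear_sum F (T : Type) (r : seq T) (c : T -> R) (G : T -> VF R n) :
  hpq_linear F -> (forall u, in_hpq (G u)) ->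
  F (\sum_(u <- r) c u *: G u) = \sum_(u <- r) c u *: F (G u).
Proof.
move=> hF hG; elim: r => [|u r IH]; first by rewrite !big_nil hpq_linear0.
rewrite !big_cons hF ?IH //; apply: in_hpq_sum => v _; exact: in_hpqZ.
Qed.

Lemma hpq_linear_basis_eq F G : hpq_linear F -> hpq_linear G ->
  (forall X, X \in B -> F X = G X) -> forall X, in_hpq X -> F X = G X.
Proof.
move=> hF hG hB X /in_hpqE [c ->].
have hBin (k : 'I_(size B)) : in_hpq (nth 0 B k) by apply: in_hpq_basis; apply: mem_nth.
rewrite -(big_map (fun k : 'I__ => k) xpredT (fun k => c k *: nth 0 B k)).
rewrite (hpq_linear_sum _ _ hF) ?(hpq_linear_sum _ _ hG) //.
by rewrite !big_map; apply: eq_bigr => k _; rewrite hB // mem_nth.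
Qed.

End HpqMembership.

Definition const_proj (R : realType) n (X : VF R n) : VF R n := vf_const (cst_part X).

Lemma const_projE (R : realType) n a M : const_proj (@vf_affine R n a M) = vf_const a.
Proof. by apply: eq_vf_affine => // k; rewrite cst_part_affine. Qed.

Lemma const_proj_lin (R : realType) n (r : R) (X Y : VF R n) :
  const_proj (r *: X + Y) = r *: const_proj X + const_proj Y.
Proof.
rewrite /const_proj /vf_const vf_affineZ vf_affineD.
by apply: eq_vf_affine => [k|k l]; rewrite ?cst_partD ?cst_partZ ?mulr0 ?addr0.
Qed.

Lemma vf_const0 (R : realType) n : vf_const (fun _ : 'I_n => 0 : R) = 0.
Proof. exact: vf_affine0. Qed.

Section Derivations.
Variables (R : realType) (p q : nat).
Local Notation n := (p + q).
Hypothesis hn : (4 <= n)%N.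
Variable f : VF R n -> VF R n.
Hypothesis f_in : forall X, in_hpq X -> in_hpq (f X).
Hypothesis f_lin : hpq_linear f.
Hypothesis f_der : forall X Y, in_hpq X -> in_hpq Y ->
  vf_bracket X (f Y) + vf_bracket (f X) Y = f (vf_bracket X Y).

Local Notation eta := (eta R p).
Local Notation so_gen := (so_gen R p).
Local Notation "'d_ i" := (vf_partial R i) (at level 8, i at level 2).
Local Notation gen_in := (in_hpq_so_gen R).
Local Notation partial_in := (in_hpq_partial R).

(* T(k,i,j) = lin_part (f d_j) k i is symmetric in (i,j) (from [d_i,d_j] = 0)
   and eta-antisymmetric in (k,i); such a tensor vanishes. *)
Lemma lin_part_f_partial i k l : lin_part (f 'd_i) k l = 0.
Proof.
have hsym i' j k' : lin_part (f 'd_j) k' i' = lin_part (f 'd_i') k' j.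
  have := f_der (partial_in i') (partial_in j).
  rewrite {1}(in_hpq_cst_lin (f_in (partial_in j))).
  rewrite {1}(in_hpq_cst_lin (f_in (partial_in i'))).
  rewrite vf_bracket_partial_l vf_bracket_partial_r vf_affineD.
  rewrite [X in f (vf_bracket _ X)]vf_partial_const vf_bracket_partial_l vf_const0.
  rewrite (hpq_linear0 f_lin) => /vf_affine_eq0 [/(_ k') e _].
  by apply/eqP; rewrite -subr_eq0; apply/eqP.
have hso i' : is_so p (lin_part (f 'd_i')) by case: (in_hpq_affine (f_in (partial_in i'))).
have e1 := hsym l i k; have e2 := hso l k i; have e3 := hsym k l i.
have e4 := hso k i l; have e5 := hsym i k l; have e6 := hso i l k.
by move: e1 e2 e3 e4 e5 e6; rewrite /eta; repeat case: ifP => _; move=> *; lra.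
Qed.

Definition trans_mx (k i : 'I_n) := cst_part (f 'd_i) k.

Lemma f_partial i : f 'd_i = vf_const (fun k => trans_mx k i).
Proof.
rewrite {1}(in_hpq_cst_lin (f_in (partial_in i))).
by apply: eq_vf_affine => // k l; exact: lin_part_f_partial.
Qed.

Lemma f_const c : f (vf_const c) = vf_const (fun k => \sum_i c i * trans_mx k i).
Proof.
rewrite vf_const_partial_expansion (hpq_linear_sum _ _ f_lin) => [|i]; last exact: partial_in.
under eq_bigr do rewrite f_partial vf_affineZ.
rewrite vf_affine_sum; apply: eq_vf_affine => [k|k l] //=.
by rewrite big1 // => i _; rewrite mulr0.
Qed.

Lemma lin_part_f_so_gen (i j k m : 'I_n) :
  lin_part (f (so_gen i j)) k m =
  (trans_mx k j * (m == i)%:R + - (eta i * eta j) * (trans_mx k i * (m == j)%:R)) -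
  ((k == j)%:R * trans_mx i m + - (eta i * eta j) * ((k == i)%:R * trans_mx j m)).
Proof.
have := f_der (gen_in i j) (partial_in m).
rewrite f_partial {1}(in_hpq_cst_lin (f_in (gen_in i j))) /so_gen.
rewrite vf_bracket_const_r !vf_bracket_partial_r f_const vf_affineD.
move=> /vf_affine_inj [/(_ k) /= e _]; move: e.
under [X in _ = X -> _]eq_bigr do rewrite mulNr mulrC.
by rewrite sumrN sum_pair_mx_l sum_pair_mx_r => e; lra.
Qed.

Lemma trans_mx_diag (i j : 'I_n) : trans_mx i i = trans_mx j j.
Proof.
have [->//|hij] := eqVneq i j.
have := proj1 (in_hpq_affine (f_in (gen_in i j))) j i.
rewrite !lin_part_f_so_gen; move: hij => /eqP hij; case_eqs.
by rewrite /eta; repeat case: ifP => _; rewrite /= => *; lra.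
Qed.

Lemma trans_mx_offdiag (k l : 'I_n) : k != l -> trans_mx k l = - (eta k * eta l * trans_mx l k).
Proof.
move=> hkl; have [m [hmk hml _]] := exists_ord_neq3 hn k l l.
have := proj1 (in_hpq_affine (f_in (gen_in m l))) k m.
rewrite !lin_part_f_so_gen; move: hkl hmk hml => /eqP ? /eqP ? /eqP ?; case_eqs.
by rewrite /eta; repeat case: ifP => _; rewrite /= => *; lra.
Qed.

(* trans_mx = c Id + trans_so, with c = trans_mx k k for any k (trans_mx_diag). *)
Definition trans_so (k l : 'I_n) := trans_mx k l - (k == l)%:R * trans_mx k k.

Lemma is_so_trans_so : is_so p trans_so.
Proof.
move=> k l; rewrite /trans_so; have [->|hkl] := eqVneq k l.
  by rewrite /= mul1r subrr mulr0 oppr0.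
by rewrite !mul0r !subr0 trans_mx_offdiag.
Qed.

Definition gen_cst (i j k : 'I_n) := cst_part (f (so_gen i j)) k.

Lemma gen_cst_swap i j k : gen_cst j i k = - (eta i * eta j) * gen_cst i j k.
Proof.
by rewrite /gen_cst so_gen_swap (hpq_linearZ _ f_lin (gen_in _ _)) cst_partZ [eta j * _]mulrC.
Qed.

(* Constant parts of f applied to [so_gen i j, so_gen j k] = so_gen i k. *)
Lemma gen_cst_triangle (i j k k' : 'I_n) : i != j -> i != k -> j != k ->
  gen_cst i k k' =
    ((k' == k)%:R * gen_cst i j j + - (eta j * eta k) * ((k' == j)%:R * gen_cst i j k))
  - ((k' == j)%:R * gen_cst j k i + - (eta i * eta j) * ((k' == i)%:R * gen_cst j k j)).
Proof.
move=> hij hik hjk; have := f_der (gen_in i j) (gen_in j k).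
rewrite vf_bracket_so_gen // => /(congr1 (fun X => cst_part X k')); rewrite cst_partD.
rewrite {1}(in_hpq_cst_lin (f_in (gen_in j k))) {1}(in_hpq_cst_lin (f_in (gen_in i j))).
by rewrite cst_part_bracket_so_gen_l cst_part_bracket_so_gen_r !sum_pair_mx_l /gen_cst => e; lra.
Qed.

Definition other (i : 'I_n) : 'I_n := odflt i [pick m | m != i].

Lemma other_neq i : other i != i.
Proof.
rewrite /other; case: pickP => //= none.
by have [m [hm _ _]] := exists_ord_neq3 hn i i i; move: (none m); rewrite /= hm.
Qed.

Definition gen_vec (i : 'I_n) := - gen_cst i (other i) (other i).

Lemma gen_cst_same i j : i != j -> gen_cst i j j = - gen_vec i.
Proof.
move=> hij; rewrite /gen_vec opprK; have [->//|hj] := eqVneq j (other i).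
have hio : i != other i by rewrite eq_sym other_neq.
rewrite (gen_cst_triangle j hio hij); last by rewrite eq_sym.
by rewrite eqxx (negbTE hj) eq_sym (negbTE hij) /=; lra.
Qed.

Lemma gen_cstE i j k : i != j ->
  gen_cst i j k = - ((k == j)%:R * gen_vec i + - (eta i * eta j) * ((k == i)%:R * gen_vec j)).
Proof.
move=> hij; have [->|hkj] := eqVneq k j.
  by rewrite gen_cst_same // eq_sym (negbTE hij) /= mul1r mul0r mulr0 addr0.
have [->|hki] := eqVneq k i.
  rewrite (gen_cst_swap j i) gen_cst_same 1?eq_sym // /=.
  by rewrite /eta; repeat case: ifP => _; lra.
have [m [hmi hmj hmk]] := exists_ord_neq3 hn i j k.
have him : i != m by rewrite eq_sym.
rewrite (gen_cst_triangle k him hij hmj).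
rewrite [k == m]eq_sym (negbTE hmk) (negbTE hkj) (negbTE hki) /=.
by rewrite !mul0r !mulr0 !addr0 subrr oppr0.
Qed.

Definition inner_vf := vf_affine gen_vec trans_so.

Lemma f_partial_decomp i :
  f 'd_i = trans_mx i i *: const_proj 'd_i + vf_bracket 'd_i inner_vf.
Proof.
rewrite f_partial /inner_vf vf_bracket_partial_l vf_partial_const const_projE.
rewrite /vf_const vf_affineZ vf_affineD; apply: eq_vf_affine => [k|k l] /=.
  by rewrite /trans_so /unitv (trans_mx_diag k i); ring.
by rewrite mulr0 addr0.
Qed.

Lemma f_so_gen_decomp (c : R) i j : i != j ->
  f (so_gen i j) = c *: const_proj (so_gen i j) + vf_bracket (so_gen i j) inner_vf.
Proof.
move=> hij; rewrite (in_hpq_cst_lin (f_in (gen_in i j))) {2}/so_gen const_projE vf_const0.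
rewrite scaler0 add0r /so_gen /inner_vf vf_bracket_affine.
apply: eq_vf_affine => [k|k l].
  under [RHS]eq_bigr do rewrite mulr0 sub0r.
  by rewrite sumrN sum_pair_mx_l -/(so_gen i j) -/(gen_cst i j k) gen_cstE.
rewrite -/(so_gen i j) lin_part_f_so_gen (@sumrB R) sum_pair_mx_l sum_pair_mx_r.
rewrite /trans_so (trans_mx_diag k i) (trans_mx_diag j i).
by move: hij => /eqP ?; case_eqs; ring.
Qed.

Lemma derivation_decomp : exists c x, in_hpq x /\
  forall X, in_hpq X -> f X = c *: const_proj X + vf_bracket X x.
Proof.
have i0 : 'I_n by exists 0%N; exact: leq_trans hn.
exists (trans_mx i0 i0), inner_vf; split; first exact: in_hpq_affine_so is_so_trans_so.
apply: (hpq_linear_basis_eq (G := fun X => trans_mx i0 i0 *: const_proj X + vf_bracket X inner_vf)).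
- exact: f_lin.
- move=> r X Y _ _ /=; rewrite const_proj_lin vf_bracketDl !scalerDr !scalerA mulrC.
  by rewrite addrACA.
apply: hpq_basisP => [i j hij|i]; first by apply: f_so_gen_decomp; rewrite neq_ltn hij.
by rewrite f_partial_decomp (trans_mx_diag i i0).
Qed.

End Derivations.

Lemma const_proj_bracket (R : realType) n a M b N :
  let X := @vf_affine R n a M in let Y := vf_affine b N in
  vf_bracket X (const_proj Y) + vf_bracket (const_proj X) Y = const_proj (vf_bracket X Y).
Proof.
rewrite /= !const_projE vf_bracket_const_r vf_bracket_const_l vf_bracket_affine const_projE.
by rewrite /vf_const vf_affineD; apply: eq_vf_affine => [k|k l] /=;
  rewrite ?(@sumrB R) ?addr0 //; lra.
Qed.

Section HpqCohomology.
Variables (R : realType) (p q : nat).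
Local Notation n := (p + q).
Hypothesis hn : (4 <= n)%N.

Lemma hpq_linear_const_proj : hpq_linear (@const_proj R n).
Proof. by move=> r X Y _ _; apply: const_proj_lin. Qed.

Lemma const_proj_derivation (X Y : VF R n) : in_hpq X -> in_hpq Y ->
  vf_bracket X (const_proj Y) + vf_bracket (const_proj X) Y = const_proj (vf_bracket X Y).
Proof. by move=> /in_hpq_cst_lin -> /in_hpq_cst_lin ->; apply: const_proj_bracket. Qed.

Lemma hpq_center_trivial (x : VF R n) :
  in_hpq x -> (forall g, in_hpq g -> vf_bracket g x = 0) -> x = 0.
Proof.
move=> /in_hpq_affine [hM ->] hcomm.
have lin0 k i : lin_part x k i = 0.
  have := hcomm _ (in_hpq_partial R i).
  by rewrite vf_bracket_partial_l => /vf_affine_eq0 [/(_ k) ->].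
have cst0 i : cst_part x i = 0.
  have [j [hji _ _]] := exists_ord_neq3 hn i i i.
  have := congr1 (fun X => cst_part X j) (hcomm _ (in_hpq_so_gen R i j)).
  rewrite cst_part_bracket_so_gen_l sum_pair_mx_l -vf_affine0 cst_part_affine eqxx.
  rewrite (negbTE hji) /= mul0r mulr0 addr0 mul1r => /eqP; rewrite oppr_eq0 => /eqP //.
by rewrite -vf_affine0; apply: eq_vf_affine.
Qed.

Lemma const_proj_not_inner :
  ~ exists x : VF R n, in_hpq x /\ forall g, in_hpq g -> const_proj g = vf_bracket g x.
Proof.
move=> [x [/in_hpq_affine [hM ->] hinner]].
have o : 'I_n by exists 0%N; exact: leq_trans hn.
have := hinner _ (in_hpq_partial R o).
rewrite vf_bracket_partial_l vf_partial_const const_projE => /vf_affine_inj [/(_ o) e _].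
by move: e; rewrite /unitv eqxx (is_so_diag o hM) => /eqP; rewrite oner_eq0.
Qed.

Lemma alpha_or_beta_index (i j : 'I_n) : (i < j)%N -> alpha_index p i j || beta_index p i j.
Proof. by rewrite /alpha_index /beta_index => ->; case: ltnP; case: leqP. Qed.

Lemma cochain1_eq_const_proj (I : VF R n -> VF R n) : is_cochain1 I ->
  (forall i j : 'I_n, alpha_index p i j -> I (vf_alpha R i j) = vf_zero R n) ->
  (forall i j : 'I_n, beta_index p i j -> I (vf_beta R i j) = vf_zero R n) ->
  (forall i : 'I_n, I (vf_partial R i) = vf_partial R i) ->
  forall X, in_hpq X -> I X = const_proj X.
Proof.
move=> hI hIa hIb hIp; apply: hpq_linear_basis_eq (cochain1_hpq_linear hI) hpq_linear_const_proj _.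
apply: hpq_basisP => [i j /alpha_or_beta_index /orP [hij|hij]|i].
- rewrite -(vf_alpha_so_gen _ hij) hIa // vf_zeroE (vf_alpha_so_gen _ hij).
  by rewrite /so_gen const_projE vf_const0.
- rewrite -(vf_beta_so_gen _ hij) hIb // vf_zeroE (vf_beta_so_gen _ hij).
  by rewrite /so_gen const_projE vf_const0.
by rewrite hIp vf_partial_const const_projE.
Qed.

End HpqCohomology.

Lemma delta1_eq0 (R : realType) n (f : VF R n -> VF R n) (X Y : VF R n) :
  delta1 f X Y = vf_zero R n <-> vf_bracket X (f Y) + vf_bracket (f X) Y = f (vf_bracket X Y).
Proof.
rewrite /delta1 vf_subE vf_addE vf_zeroE; split=> [/subr0_eq //|->]; exact: subrr.
Qed.

Theorem lemma7p4 (R : realType) (p q : nat) (hn : (4 <= p + q)%N)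
  (I : VF R (p + q) -> VF R (p + q)) :
  is_cochain1 I ->
  (forall i j : 'I_(p + q), alpha_index p i j -> I (vf_alpha R i j) = vf_zero R (p + q)) ->
  (forall i j : 'I_(p + q), beta_index p i j -> I (vf_beta R i j) = vf_zero R (p + q)) ->
  (forall i : 'I_(p + q), I (vf_partial R i) = vf_partial R i) ->
  (forall x, in_hpq x ->
     (forall g, in_hpq g -> delta0 x g = vf_zero R (p + q)) -> x = vf_zero R (p + q)) /\
  ((forall g1 g2, in_hpq g1 -> in_hpq g2 -> delta1 I g1 g2 = vf_zero R (p + q)) /\
   ~ (exists x, in_hpq x /\ forall g, in_hpq g -> I g = delta0 x g) /\
   (forall f, is_cochain1 f ->
      (forall g1 g2, in_hpq g1 -> in_hpq g2 -> delta1 f g1 g2 = vf_zero R (p + q)) ->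
      exists (c : R) (x : VF R (p + q)), in_hpq x /\
        forall g, in_hpq g -> f g = vf_add (vf_scale c (I g)) (delta0 x g))).
Proof.
move=> hI hIa hIb hIp; have IJ := cochain1_eq_const_proj hI hIa hIb hIp.
split.
  move=> x hx h0; rewrite vf_zeroE; apply: (hpq_center_trivial hn hx) => g hg.
  by move: (h0 g hg); rewrite vf_zeroE.
split.
  move=> g1 g2 h1 h2; apply/delta1_eq0.
  rewrite !IJ ?const_proj_derivation //; exact: in_hpq_bracket.
split.
  move=> [x [hx hinner]]; apply: (const_proj_not_inner hn); exists x; split=> // g hg.
  by rewrite -IJ // hinner.
move=> f hf hfder.
have [c [x [hx hdec]]] := derivation_decomp hn hf.1 (cochain1_hpq_linear hf)
  (fun X Y hX hY => proj1 (delta1_eq0 f X Y) (hfder X Y hX hY)).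
by exists c, x; split=> // g hg; rewrite hdec // vf_addE vf_scaleE IJ.
Qed.
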